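(* Let $\lambda>0$ and $g^*\ge 0$. For finite disjoint instance sets $I_L, I_R$ whose instances $i$ carry real gradients $g_i$, define the split gain $$G(I_L,I_R)=\frac{\left(\sum_{i\in I_L}g_i\right)^2}{|I_L|+\lambda}+\frac{\left(\sum_{i\in I_R}g_i\right)^2}{|I_R|+\lambda}.$$ Let $\Delta G$ be the sensitivity of $G$: the supremum of $|G(I_L,I_R)-G(I_L',I_R')|$ over all pairs of neighboring split configurations in which every gradient involved satisfies $|g_i|\le g^*$. Then $\Delta G\le 3{g^*}^2$.
   Context: Two split configurations $(I_L,I_R)$ and $(I_L',I_R')$ are neighboring if one is obtained from the other by adding a single instance $s$ (with gradient $g_s$) to one of the two children, i.e. $(I_L',I_R')=(I_L\cup\{s\},I_R)$ or $(I_L,I_R\cup\{s\})$, or vice versa. Here $g^*=\max_i |g_i|$ over the instances in the dataset. *)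

From mathcomp Require Import all_boot all_order all_algebra.
Set Implicit Arguments. Unset Strict Implicit. Unset Printing Implicit Defensive.
Import Order.TTheory GRing.Theory Num.Theory.
Local Open Scope ring_scope.

Definition gain (R : realFieldType) (T : finType) (g : T -> R) (lambda : R)
  (IL IR : {set T}) : R :=
  (\sum_(i in IL) g i) ^+ 2 / (#|IL|%:R + lambda)
  + (\sum_(i in IR) g i) ^+ 2 / (#|IR|%:R + lambda).

Definition add_one (T : finType) (IL IR IL' IR' : {set T}) : Prop :=
  exists s : T, s \notin IL :|: IR /\
    ((IL' = s |: IL /\ IR' = IR) \/ (IL' = IL /\ IR' = s |: IR)).

Definition neighboring (T : finType) (IL IR IL' IR' : {set T}) : Prop :=
  [disjoint IL & IR] /\ [disjoint IL' & IR'] /\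
  (add_one IL IR IL' IR' \/ add_one IL' IR' IL IR).

From mathcomp Require Import all_boot all_order all_algebra.
From mathcomp Require Import ring lra.
Set Implicit Arguments. Unset Strict Implicit. Unset Printing Implicit Defensive.
Import Order.TTheory GRing.Theory Num.Theory.
Local Open Scope ring_scope.

(* Neighboring configurations differ in one child only, which gains one
   instance s. Writing S for the old gradient sum, n for the old size plus
   lambda and x = g s, the change of that child's term is
   (S^2 - 2 n S x - n x^2) / (n (n + 1)); since |S| <= n g* and |x| <= g*,
   the numerator is at most 3 n^2 g*^2 in absolute value. *)

Lemma norm_sqr_div_succ_le (R : realFieldType) (n S x G : R) :
  0 < n -> `|S| <= n * G -> `|x| <= G ->
  `|S ^+ 2 / n - (S + x) ^+ 2 / (n + 1)| <= 3 * G ^+ 2.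
Proof.
move=> n_gt0 /[dup] SnG; rewrite !ler_norml => /andP[S_ge S_le] /andP[x_ge x_le].
have nn1_gt0 : 0 < n * (n + 1) by apply: mulr_gt0 => //; lra.
have -> : S ^+ 2 / n - (S + x) ^+ 2 / (n + 1)
    = (S ^+ 2 - 2 * n * S * x - n * x ^+ 2) / (n * (n + 1)).
  by field; apply/andP; split; apply/lt0r_neq0 => //; lra.
have Sx_le : `|S * x| <= n * G ^+ 2.
  by rewrite normrM expr2 mulrA ler_pM // ler_norml; apply/andP.
have S2_le : S ^+ 2 <= n ^+ 2 * G ^+ 2 by nra.
have x2_le : x ^+ 2 <= G ^+ 2 by nra.
move: Sx_le; rewrite ler_norml => /andP[Sx_ge Sx_le].
rewrite ler_pdivrMr // ler_pdivlMr //; apply/andP; split; nra.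
Qed.

Definition child_score (R : realFieldType) (T : finType) (g : T -> R)
    (lambda : R) (I : {set T}) : R :=
  (\sum_(i in I) g i) ^+ 2 / (#|I|%:R + lambda).

Lemma gainE (R : realFieldType) (T : finType) (g : T -> R) (lambda : R)
    (IL IR : {set T}) :
  gain g lambda IL IR = child_score g lambda IL + child_score g lambda IR.
Proof. by []. Qed.

Lemma norm_sum_le_card (R : realFieldType) (T : finType) (g : T -> R) (G : R)
    (I : {set T}) :
  {in I, forall i, `|g i| <= G} -> `|\sum_(i in I) g i| <= #|I|%:R * G.
Proof.
move=> gI; apply: (le_trans (ler_norm_sum _ _ _)).
by rewrite mulr_natl -sumr_const; apply: ler_sum.
Qed.

Lemma child_score_setU1 (R : realFieldType) (T : finType) (g : T -> R)
    (lambda G : R) (I : {set T}) (s : T) :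
  0 < lambda -> s \notin I -> {in s |: I, forall i, `|g i| <= G} ->
  `|child_score g lambda I - child_score g lambda (s |: I)| <= 3 * G ^+ 2.
Proof.
move=> lambda_gt0 sI gsI; rewrite /child_score big_setU1 //= cardsU1 sI add1n.
rewrite -natr1 (addrC (g s)) -addrA (addrC 1) addrA.
have G_ge0 : 0 <= G by apply: le_trans (gsI s (setU11 s I)).
apply: norm_sqr_div_succ_le; last exact: gsI (setU11 s I).
- by rewrite ltr_wpDl.
- apply: (le_trans (norm_sum_le_card (G := G) _)).
    by move=> i iI; apply: gsI; rewrite in_setU1 iI orbT.
  by rewrite ler_wpM2r // lerDl ltW.
Qed.

Lemma gain_add_one (R : realFieldType) (T : finType) (g : T -> R)
    (lambda G : R) (IL IR IL' IR' : {set T}) :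
  0 < lambda -> add_one IL IR IL' IR' ->
  {in IL' :|: IR', forall i, `|g i| <= G} ->
  `|gain g lambda IL IR - gain g lambda IL' IR'| <= 3 * G ^+ 2.
Proof.
move=> lambda_gt0 [s [+ [[-> ->]|[-> ->]]]] gI';
  rewrite in_setU negb_or => /andP[sL sR]; rewrite !gainE.
- rewrite opprD addrACA subrr addr0; apply: child_score_setU1 => // i i_in.
  by apply: gI'; rewrite in_setU i_in.
- rewrite opprD addrACA subrr add0r; apply: child_score_setU1 => // i i_in.
  by apply: gI'; rewrite in_setU i_in orbT.
Qed.

Theorem lemma1 (R : realFieldType) (T : finType) (g : T -> R)
  (lambda gstar : R) (hlambda : 0 < lambda) (hgstar : 0 <= gstar)
  (IL IR IL' IR' : {set T}) :
  neighboring IL IR IL' IR' ->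
  (forall i, i \in (IL :|: IR) :|: (IL' :|: IR') -> `|g i| <= gstar) ->
  `|gain g lambda IL IR - gain g lambda IL' IR'| <= 3 * gstar ^+ 2.
Proof.
move=> [_ [_ [grow|shrink]]] g_le.
- by apply: gain_add_one grow _ => // i i_in; apply: g_le; rewrite in_setU i_in orbT.
- by rewrite distrC; apply: gain_add_one shrink _ => // i i_in;
    apply: g_le; rewrite in_setU i_in.
Qed.
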